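(* Let $R$ be a unital associative algebra over an infinite field $F$, let $n>1$ be an integer, and let $p\in F[x]$ be a nonconstant polynomial. If $A\in\mathrm{M}_n(R)$ is similar (via an invertible matrix in $\mathrm{M}_n(R)$) to a matrix in $\mathrm{M}_n(R)$ all of whose diagonal entries are zero, then there exist $A_1,B_1\in\mathrm{M}_n(R)$ with $A=p(A_1B_1)-p(B_1A_1)$. *)

From HB Require Import structures.
From mathcomp Require Import all_boot all_order all_algebra.
Set Implicit Arguments. Unset Strict Implicit. Unset Printing Implicit Defensive.
Import GRing.Theory.
Local Open Scope ring_scope.

Definition infinite_field (F : fieldType) : Prop :=
  forall s : seq F, exists x : F, x \notin s.

Definition mxpeval (F : fieldType) (R : algType F) (n : nat)
  (p : {poly F}) (M : 'M[R]_n) : 'M[R]_n :=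
  \sum_(i < size p) ((p`_i)%:A : R)%:M *m (M ^+ i).

(* Similarity in M_n(R) via an invertible matrix of M_n(R)
   (R is in general non-commutative, so invertibility is two-sided). *)
Definition mx_similar (R : pzRingType) (n : nat) (A B : 'M[R]_n) : Prop :=
  exists P Q : 'M[R]_n,
    [/\ P *m Q = 1%:M, Q *m P = 1%:M & A = P *m B *m Q].

Definition zero_diag (R : pzRingType) (n : nat) (B : 'M[R]_n) : Prop :=
  forall i : 'I_n, B i i = 0.

From HB Require Import structures.
From mathcomp Require Import all_boot all_order all_algebra zify.
Set Implicit Arguments.
Unset Strict Implicit.
Unset Printing Implicit Defensive.

Import GRing.Theory.
Local Open Scope ring_scope.

(* Write B = Nu - Nl with Nu strictly upper and Nl strictly lower triangular.
   Since F is infinite we may pick a_1, ..., a_n with the values p(a_i)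
   pairwise distinct; then G = diag(p(a_i)) = p(D) for D = diag(a_i).  A
   matrix G + N with N strictly triangular is similar to G (solve the
   Sylvester equations XG - GX = W degree by degree), so
   G + Nu = U p(D) U^-1 = p(U D U^-1) and G + Nl = p(V D V^-1).  Finally
   U D U^-1 = XY and V D V^-1 = YX for X = U V^-1, Y = V D U^-1. *)

Section LevelRaising.
Variables (R : pzRingType) (n : nat) (r : 'I_n -> nat).

(* For r = id (resp. r = rev_ord), [level_raising 1] means strictly upper
   (resp. lower) triangular. *)
Definition level_raising (k : nat) (W : 'M[R]_n) : Prop :=
  forall i j, (r j < r i + k)%N -> W i j = 0.

Lemma level_raising0_scalar (a : R) : level_raising 0 a%:M.
Proof.
by move=> i j; rewrite addn0 mxE; case: eqP => // ->; rewrite ltnn.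
Qed.

Lemma level_raising_le (k l : nat) (W : 'M[R]_n) :
  (l <= k)%N -> level_raising k W -> level_raising l W.
Proof.
by move=> lk Wk i j lt_ji; apply: Wk; rewrite (leq_trans lt_ji) ?leq_add2l.
Qed.

Lemma level_raising_sum (I : Type) (s : seq I) (P : pred I) k
    (W : I -> 'M[R]_n) :
  (forall l, level_raising k (W l)) ->
  level_raising k (\sum_(l <- s | P l) W l).
Proof.
move=> Wk; elim/big_ind: _ => // [i j _ | W1 W2 W1k W2k i j lt_ji].
  by rewrite mxE.
by rewrite mxE W1k ?W2k ?addr0.
Qed.

Lemma level_raising_mul (k l : nat) (M W : 'M[R]_n) :
  level_raising k M -> level_raising l W -> level_raising (k + l) (M *m W).
Proof.
move=> Mk Wl i j lt_ji; rewrite mxE; apply: big1 => m _.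
have [lt_mi | le_im] := ltnP (r m) (r i + k); first by rewrite Mk ?mul0r.
by rewrite Wl ?mulr0 // (leq_trans lt_ji) // addnA leq_add2r.
Qed.

Lemma level_raising_exp (N : 'M[R]_n) (k : nat) :
  level_raising 1 N -> level_raising k (N ^+ k).
Proof.
move=> N1; elim: k => [|k IH]; first exact: level_raising0_scalar.
by rewrite exprS -mulmxE -add1n; apply: level_raising_mul.
Qed.

Lemma level_raising_eq0 (k : nat) (W : 'M[R]_n) :
  (forall i, (r i < k)%N) -> level_raising k W -> W = 0.
Proof. by move=> r_lt Wk; apply/matrixP => i j; rewrite mxE Wk ?ltn_addl. Qed.

Lemma level_raising1_zero_diag (W : 'M[R]_n) : level_raising 1 W -> zero_diag W.
Proof. by move=> W1 i; rewrite W1 // addn1. Qed.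

Lemma unipotent_mx_invertible (N : 'M[R]_n) :
  (forall i, (r i < n)%N) -> level_raising 1 N ->
  exists V, (1%:M + N) *m V = 1%:M /\ V *m (1%:M + N) = 1%:M.
Proof.
move=> r_lt N1; pose V := \sum_(k < n) (- N) ^+ k.
have nilN : (- N) ^+ n = 0.
  by rewrite exprNn (level_raising_eq0 r_lt (level_raising_exp N1)) mulr0.
have geom : (- N - 1) * V = -1 by rewrite -subrX1 nilN sub0r.
have commV : GRing.comm (- N - 1) V.
  apply: commr_sum => k _; apply: commrX.
  by rewrite /GRing.comm mulrBl mulrBr mul1r mulr1.
have -> : 1%:M + N = - (- N - 1) by rewrite opprB opprK addrC.
by exists V; rewrite !mulmxE mulNr mulrN -commV geom opprK.
Qed.

End LevelRaising.

Lemma mx_similar_conj (R : pzRingType) (n : nat) (P Q M N : 'M[R]_n) :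
  P *m Q = 1%:M -> Q *m P = 1%:M ->
  mx_similar M N -> mx_similar (P *m M *m Q) N.
Proof.
move=> PQ QP [X [X' [XX' X'X ->]]]; exists (P *m X), (X' *m Q); split.
- by rewrite mulmxA -(mulmxA P) XX' mulmx1.
- by rewrite mulmxA -(mulmxA X') QP mulmx1.
- by rewrite !mulmxA.
Qed.

Section Sylvester.
Variables (F : fieldType) (R : algType F) (n : nat).

Definition diag_alg (d : 'I_n -> F) : 'M[R]_n := diag_mx (\row_i (d i)%:A).

Variable g : 'I_n -> F.

(* The diagonal entries are junk ((g i - g i)^-1 = 0); the equation below
   only constrains the off-diagonal ones. *)
Definition sylvester_sol (W : 'M[R]_n) : 'M[R]_n :=
  \matrix_(i, j) ((g j - g i)^-1 *: W i j).

Lemma level_raising_sylvester_sol r k (W : 'M[R]_n) :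
  level_raising r k W -> level_raising r k (sylvester_sol W).
Proof. by move=> Wk i j lt_ji; rewrite mxE Wk ?scaler0. Qed.

Hypothesis inj_g : injective g.

Lemma sylvester_solP (W : 'M[R]_n) :
  zero_diag W ->
  sylvester_sol W *m diag_alg g - diag_alg g *m sylvester_sol W = W.
Proof.
move=> W0; apply/matrixP => i j.
rewrite /diag_alg mul_diag_mx mul_mx_diag !mxE.
have [<-|neq_ij] := eqVneq i j; first by rewrite W0 scaler0 mul0r mulr0 subr0.
rewrite mulr_algr mulr_algl !scalerA -scalerBl -mulrBl mulfV ?scale1r //.
by rewrite subr_eq0 (inj_eq inj_g) eq_sym.
Qed.

Lemma diag_add_raising_similar r (N : 'M[R]_n) :
  (forall i, (r i < n)%N) -> level_raising r 1 N ->
  mx_similar (diag_alg g + N) (diag_alg g).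
Proof.
move=> r_lt N1; set G := diag_alg g.
pose L W := sylvester_sol (N *m W).
have L_raising k : level_raising r k (iter k L 1%:M).
  elim: k => [|k IH]; first exact: level_raising0_scalar.
  apply: level_raising_sylvester_sol.
  by rewrite -add1n; apply: level_raising_mul.
(* Each term of U is the Sylvester solution for N times the previous one, so
   the commutators telescope; the last product N L^n 1 raises levels by n + 1
   and vanishes. *)
pose U := \sum_(k < n.+1) iter k L 1%:M.
have commU : U *m G - G *m U = N *m U.
  have NL_raising k : level_raising r k.+1 (N *m iter k L 1%:M).
    by rewrite -add1n; apply: level_raising_mul.
  rewrite mulmx_suml mulmx_sumr -sumrB big_ord_recl /= mulmx1 mul1mx subrr.
  rewrite add0r mulmx_sumr big_ord_recr /= (level_raising_eq0 _ (NL_raising n)).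
    rewrite addr0; apply: eq_bigr => k _; apply: sylvester_solP.
    exact/level_raising1_zero_diag/(level_raising_le _ (NL_raising k)).
  by move=> i; rewrite ltnS ltnW.
pose N' := \sum_(k < n) iter k.+1 L 1%:M.
have UE : U = 1%:M + N' by rewrite /U big_ord_recl.
have N'1 : level_raising r 1 N'.
  by apply: level_raising_sum => k; exact: level_raising_le (L_raising k.+1).
have [V [UV VU]] := unipotent_mx_invertible r_lt N'1.
rewrite -UE in UV VU; exists U, V; split => //.
have intertwine : (G + N) *m U = U *m G by rewrite mulmxDl -commU addrC subrK.
by rewrite -intertwine -mulmxA UV mulmx1.
Qed.

End Sylvester.

Section PolyEval.
Variables (F : fieldType) (R : algType F) (n : nat) (p : {poly F}).

Lemma scalar_alg_mxC (c : F) (X : 'M[R]_n) : (c%:A)%:M *m X = X *m (c%:A)%:M.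
Proof.
rewrite mul_scalar_mx; apply/matrixP => i j; rewrite !mxE (bigD1 j) //= big1.
  by rewrite mxE eqxx mulr1n addr0 mulr_algl mulr_algr.
by move=> k /negbTE neq_kj; rewrite mxE neq_kj mulr0n mulr0.
Qed.

Lemma mxpeval_conj (X X' M : 'M[R]_n) :
  X *m X' = 1%:M -> X' *m X = 1%:M ->
  mxpeval p (X *m M *m X') = X *m mxpeval p M *m X'.
Proof.
move=> XX' X'X.
have conjX k : (X *m M *m X') ^+ k = X *m M ^+ k *m X'.
  elim: k => [|k IH]; first by rewrite !expr0 -idmxE mulmx1.
  by rewrite !exprS -!mulmxE IH !mulmxA -(mulmxA _ X' X) X'X mulmx1.
rewrite /mxpeval mulmx_sumr mulmx_suml; apply: eq_bigr => k _.
by rewrite conjX !mulmxA scalar_alg_mxC.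
Qed.

Lemma mxpeval_diag_alg (a : 'I_n -> F) :
  mxpeval p (diag_alg R a) = diag_alg R (fun i => p.[a i]).
Proof.
have diag_algX k : diag_alg R a ^+ k = diag_alg R (fun i => a i ^+ k).
  elim: k => [|k IH]; first by apply/matrixP => i j; rewrite !mxE scale1r.
  by rewrite exprS -mulmxE IH mulmx_diag; congr diag_mx; apply/rowP => i;
    rewrite !mxE -scalerAl mul1r scalerA -exprS.
apply/matrixP => i j; rewrite summxE /diag_alg !mxE horner_coef scaler_suml.
rewrite -sumrMnl.
apply: eq_bigr => k _; rewrite diag_algX mul_scalar_mx !mxE.
by case: eqP => _; rewrite ?mulr0n ?mulr0 ?mulr1n // mulr_algl scalerA.
Qed.

Lemma sub_similar_mxpeval (D M M' : 'M[R]_n) :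
  mx_similar M (mxpeval p D) -> mx_similar M' (mxpeval p D) ->
  exists A1 B1, M - M' = mxpeval p (A1 *m B1) - mxpeval p (B1 *m A1).
Proof.
move=> [X [X' [XX' X'X ->]]] [Y [Y' [YY' Y'Y ->]]].
exists (X *m Y'), (Y *m D *m X').
rewrite -!mxpeval_conj // !mulmxA.
by rewrite -(mulmxA X Y') Y'Y mulmx1 -(mulmxA _ X' X) X'X mulmx1.
Qed.

End PolyEval.

Definition mx_part (R : pzRingType) (n : nat) (r : 'I_n -> nat) (B : 'M[R]_n) :
  'M[R]_n := \matrix_(i, j) if (r i < r j)%N then B i j else 0.

Lemma level_raising_part (R : pzRingType) (n : nat) (r : 'I_n -> nat)
    (B : 'M[R]_n) :
  level_raising r 1 (mx_part r B).
Proof. by move=> i j; rewrite addn1 ltnS mxE leqNgt => /negbTE ->. Qed.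

Lemma zero_diag_triangular_split (R : pzRingType) (n : nat) (B : 'M[R]_n) :
  zero_diag B ->
  B = mx_part (fun i => i) B - mx_part (fun i => rev_ord i) (- B).
Proof.
move=> B0; apply/matrixP => i j; rewrite !mxE /=.
have [/ord_inj <-|neq_ij] := eqVneq (i : nat) j.
  by rewrite !ltnn B0 subr0.
have := ltn_ord i; have := ltn_ord j.
by case: ifP; case: ifP; rewrite ?sub0r ?subr0 ?opprK // => *; exfalso; lia.
Qed.

Section InfiniteField.
Variables (F : fieldType) (hF : infinite_field F).

Lemma infinite_field_uniq_seq (m : nat) :
  exists s : seq F, size s = m /\ uniq s.
Proof.
elim: m => [|m [s [size_s uniq_s]]]; first by exists [::].
by have [x x_new] := hF s; exists (x :: s); rewrite /= size_s x_new.
Qed.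

Lemma nonconst_poly_avoid (p : {poly F}) (s : seq F) :
  (1 < size p)%N -> exists x, p.[x] \notin s.
Proof.
move=> p_nonconst; pose q := \prod_(c <- s) (p - c%:P).
have q_neq0 : q != 0.
  rewrite prodf_seq_neq0; apply/allP => c _ /=; rewrite subr_eq0.
  by apply: contraTneq p_nonconst => ->; rewrite size_polyC -leqNgt leq_b1.
have [t [size_t uniq_t]] := infinite_field_uniq_seq (size q).
have /allPn [x _ not_root] : ~~ all (root q) t.
  apply: contraTN (leqnn (size q)) => /(max_poly_roots q_neq0)/(_ uniq_t).
  by rewrite size_t -ltnNge.
exists x; apply: contra not_root => p_in.
rewrite /root horner_prod prodf_seq_eq0; apply/hasP; exists p.[x] => //.
by rewrite /= hornerD hornerN hornerC subrr.
Qed.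

Lemma exists_injective_poly_values (p : {poly F}) (n : nat) :
  (1 < size p)%N -> exists a : 'I_n -> F, injective (fun i => p.[a i]).
Proof.
move=> p_nonconst.
have [t [size_t uniq_pt]] :
    exists t : seq F, size t = n /\ uniq (map (horner p) t).
  elim: n => [|n [t [size_t uniq_pt]]]; first by exists [::].
  have [x x_new] := nonconst_poly_avoid (map (horner p) t) p_nonconst.
  by exists (x :: t); rewrite /= size_t x_new.
exists (fun i => nth 0 t i) => i j /= eq_pij; apply/val_inj/eqP.
rewrite -(nth_uniq 0 _ _ uniq_pt) ?size_map ?size_t ?ltn_ord //.
by rewrite !(nth_map 0) ?size_t ?ltn_ord //; apply/eqP.
Qed.

End InfiniteField.

Theorem theorem3p4 (F : fieldType) (R : algType F) (n : nat)
  (p : {poly F}) (A : 'M[R]_n) :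
  infinite_field F -> (1 < n)%N -> (1 < size p)%N ->
  (exists B : 'M[R]_n, zero_diag B /\ mx_similar A B) ->
  exists A1 B1 : 'M[R]_n,
    A = mxpeval p (A1 *m B1) - mxpeval p (B1 *m A1).
Proof.
move=> hF _ p_nonconst [B [B0 [P [Q [PQ QP ->]]]]].
have [a inj_pa] := exists_injective_poly_values hF n p_nonconst.
pose D : 'M[R]_n := diag_alg R a.
pose Nu := mx_part (fun i => i) B.
pose Nl := mx_part (fun i => rev_ord i) (- B).
have simNu : mx_similar (mxpeval p D + Nu) (mxpeval p D).
  rewrite mxpeval_diag_alg.
  exact: diag_add_raising_similar inj_pa _ _ (@ltn_ord n)
    (level_raising_part _).
have simNl : mx_similar (mxpeval p D + Nl) (mxpeval p D).
  rewrite mxpeval_diag_alg.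
  exact: diag_add_raising_similar inj_pa _ _ (fun i => ltn_ord _)
    (level_raising_part _).
rewrite (zero_diag_triangular_split B0) -/Nu -/Nl.
have -> : Nu - Nl = (mxpeval p D + Nu) - (mxpeval p D + Nl).
  by rewrite opprD addrACA subrr add0r.
rewrite mulmxBr mulmxBl; apply: (sub_similar_mxpeval (D := D)).
  exact: mx_similar_conj simNu.
exact: mx_similar_conj simNl.
Qed.
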